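(* Let $\bar L:=2\max_{i=1,2}\frac{\|A_i\|^2}{\sigma_i}$ and consider the following iteration (Algorithm 1). Set $\tau_0:=0.499$, $\beta_1^0=\beta_2^0:=\sqrt{\bar L}$, $\bar y^0:=\frac{1}{\beta_2^0}(Ax^c-b)$, $\bar x^0:=P(x^c;\beta_2^0)$. For $k=0,1,2,\dots$: set $\beta_2^{k+1}:=(1-\tau_k)\beta_2^k$; compute $$\hat x^k:=(1-\tau_k)\bar x^k+\tau_kx^*(\bar y^k;\beta_1^k),\quad \bar y^{k+1}:=(1-\tau_k)\bar y^k+\tau_ky^*(\hat x^k;\beta_2^{k+1}),\quad \bar x^{k+1}:=P(\hat x^k;\beta_2^{k+1});$$ set $\beta_1^{k+1}:=(1-\tau_k)\beta_1^k$ and $\tau_{k+1}:=\frac{\tau_k}{\tau_k+1}$. Then for all $k\ge0$ and any $y^*\in Y^*$, $$\phi(\bar x^k)-d(\bar y^k)\le\frac{\sqrt{\bar L}(D_1+D_2)}{0.499k+1},\qquad \|A\bar x^k-b\|\le\frac{\sqrt{\bar L}}{0.499k+1}\Big[\|y^*\|+\sqrt{\|y^*\|^2+2(D_1+D_2)}\Big].$$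
   Context: All spaces carry the Euclidean inner product and norm $\|\cdot\|$; for a matrix, $\|\cdot\|$ is the induced operator norm. For $i=1,2$: $X_i\subset\mathbb{R}^{n_i}$ is nonempty, closed, convex and bounded; $\phi_i:\mathbb{R}^{n_i}\to\mathbb{R}$ is convex; $A_i\in\mathbb{R}^{m\times n_i}$; $b\in\mathbb{R}^m$. Write $x=(x_1,x_2)$, $X=X_1\times X_2$, $A=[A_1,A_2]$ (so $Ax=A_1x_1+A_2x_2$), $\phi(x)=\phi_1(x_1)+\phi_2(x_2)$. The primal problem is $\min\{\phi(x): x\in X,\ Ax=b\}$; standing assumption: its solution set is nonempty and either some $x\in\mathrm{ri}(X)$ satisfies $Ax=b$ or $X_1,X_2$ are polyhedral. The dual function is $d(y)=\min_{x\in X}\{\phi(x)+y^T(Ax-b)\}$ and $Y^*\neq\emptyset$ is the set of maximizers of $d$ on $\mathbb{R}^m$. For $i=1,2$, $p_i$ is a prox-function of $X_i$: continuous and strongly convex on $X_i$ with convexity parameter $\sigma_i>0$, with prox-center $x_i^c=\arg\min_{x_i\in X_i}p_i(x_i)$ normalized so $p_i(x_i^c)=0$, and $D_i:=\max_{x_i\in X_i}p_i(x_i)$; $x^c=(x_1^c,x_2^c)$. For $\beta_1>0$, $x^*(y;\beta_1)$ denotes the (unique) minimizer over $x\in X$ of $\phi(x)+y^T(Ax-b)+\beta_1(p_1(x_1)+p_2(x_2))$. For $\beta_2>0$, $y^*(x;\beta_2):=\frac{1}{\beta_2}(Ax-b)$. With $L_i^\psi(\beta_2):=\frac{2\|A_i\|^2}{\beta_2}$,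 the proximal mapping is $P_i(\hat x;\beta_2):=\arg\min_{x_i\in X_i}\{\phi_i(x_i)+y^*(\hat x;\beta_2)^TA_i(x_i-\hat x_i)+\frac{L_i^\psi(\beta_2)}{2}\|x_i-\hat x_i\|^2\}$ for $\hat x=(\hat x_1,\hat x_2)$, and $P(\hat x;\beta_2):=(P_1(\hat x;\beta_2),P_2(\hat x;\beta_2))$. *)

From mathcomp Require Import ssreflect ssrbool ssrnat eqtype fintype bigop.
From Stdlib Require Import Reals List ClassicalEpsilon.
Open Scope R_scope.

Definition vec (n : nat) := 'I_n -> R.
Definition vsum (n : nat) (f : 'I_n -> R) : R := \big[Rplus/0%R]_(i < n) f i.
Definition vadd {n} (u v : vec n) : vec n := fun i => u i + v i.
Definition vsub {n} (u v : vec n) : vec n := fun i => u i - v i.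
Definition vscale {n} (a : R) (u : vec n) : vec n := fun i => a * u i.
Definition dot {n} (u v : vec n) : R := vsum n (fun i => u i * v i).
Definition vnorm {n} (u : vec n) : R := sqrt (dot u u).

Definition mat (m n : nat) := 'I_m -> 'I_n -> R.
Definition mv {m n} (A : mat m n) (x : vec n) : vec m :=
  fun i => vsum n (fun j => A i j * x j).

Definition opnorm_set {m n} (A : mat m n) (r : R) : Prop :=
  exists x : vec n, vnorm x <= 1 /\ r = vnorm (mv A x).
Definition opnorm {m n} (A : mat m n) : R :=
  epsilon (inhabits 0) (fun v => is_lub (opnorm_set A) v).

Definition nonempty_set {n} (X : vec n -> Prop) := exists x, X x.
Definition closed_vset {n} (X : vec n -> Prop) :=
  forall x, (forall eps, eps > 0 -> exists y, X y /\ vnorm (vsub x y) < eps) -> X x.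
Definition convex_set {n} (X : vec n -> Prop) :=
  forall x y t, X x -> X y -> 0 <= t <= 1 ->
    X (vadd (vscale t x) (vscale (1 - t) y)).
Definition bounded_set {n} (X : vec n -> Prop) :=
  exists M, forall x, X x -> vnorm x <= M.
Definition convex_fun {n} (f : vec n -> R) :=
  forall x y t, 0 <= t <= 1 ->
    f (vadd (vscale t x) (vscale (1 - t) y)) <= t * f x + (1 - t) * f y.
Definition continuous_on {n} (X : vec n -> Prop) (f : vec n -> R) :=
  forall x, X x -> forall eps, eps > 0 -> exists delta, delta > 0 /\
    forall y, X y -> vnorm (vsub y x) < delta -> Rabs (f y - f x) < eps.
Definition strongly_convex_on {n} (X : vec n -> Prop) (sigma : R) (f : vec n -> R) :=
  forall x y t, X x -> X y -> 0 <= t <= 1 ->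
    f (vadd (vscale t x) (vscale (1 - t) y))
      <= t * f x + (1 - t) * f y - sigma / 2 * t * (1 - t) * (vnorm (vsub x y)) ^ 2.
Definition polyhedral {n} (X : vec n -> Prop) :=
  exists H : list (vec n * R), forall x, X x <-> (forall h, In h H -> dot (fst h) x <= snd h).

Definition is_argmin {T : Type} (X : T -> Prop) (f : T -> R) (x : T) :=
  X x /\ forall z, X z -> f x <= f z.
Definition is_min_value {T : Type} (X : T -> Prop) (f : T -> R) (v : R) :=
  (exists x, X x /\ f x = v) /\ forall z, X z -> v <= f z.
Definition is_max_value {T : Type} (X : T -> Prop) (f : T -> R) (v : R) :=
  (exists x, X x /\ f x = v) /\ forall z, X z -> f z <= v.

Definition pvec (n1 n2 : nat) := (vec n1 * vec n2)%type.
Definition padd {n1 n2} (x z : pvec n1 n2) : pvec n1 n2 :=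
  (vadd (fst x) (fst z), vadd (snd x) (snd z)).
Definition pscale {n1 n2} (a : R) (x : pvec n1 n2) : pvec n1 n2 :=
  (vscale a (fst x), vscale a (snd x)).
Definition pnorm {n1 n2} (x : pvec n1 n2) : R :=
  sqrt (dot (fst x) (fst x) + dot (snd x) (snd x)).
Definition psub {n1 n2} (x z : pvec n1 n2) : pvec n1 n2 :=
  (vsub (fst x) (fst z), vsub (snd x) (snd z)).
Definition pzero n1 n2 : pvec n1 n2 := (fun _ => 0, fun _ => 0).
Definition pset {n1 n2} (X1 : vec n1 -> Prop) (X2 : vec n2 -> Prop) (x : pvec n1 n2) :=
  X1 (fst x) /\ X2 (snd x).

Definition affine_comb {n1 n2} (l : list (R * pvec n1 n2)) : pvec n1 n2 :=
  fold_right (fun p acc => padd (pscale (fst p) (snd p)) acc) (pzero n1 n2) l.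
Definition in_aff {n1 n2} (C : pvec n1 n2 -> Prop) (z : pvec n1 n2) :=
  exists l : list (R * pvec n1 n2),
    (forall p, In p l -> C (snd p)) /\
    fold_right (fun p s => fst p + s) 0 l = 1 /\ z = affine_comb l.
Definition in_ri {n1 n2} (C : pvec n1 n2 -> Prop) (x : pvec n1 n2) :=
  C x /\ exists eps, eps > 0 /\
    forall z, in_aff C z -> pnorm (psub z x) < eps -> C z.

(* A x - b with A = [A1, A2] *)
Definition resid {m n1 n2} (A1 : mat m n1) (A2 : mat m n2) (b : vec m) (x : pvec n1 n2) : vec m :=
  vsub (vadd (mv A1 (fst x)) (mv A2 (snd x))) b.
Definition phi {n1 n2} (phi1 : vec n1 -> R) (phi2 : vec n2 -> R) (x : pvec n1 n2) : R :=
  phi1 (fst x) + phi2 (snd x).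
Definition lagr {m n1 n2} (phi1 : vec n1 -> R) (phi2 : vec n2 -> R)
  (A1 : mat m n1) (A2 : mat m n2) (b : vec m) (y : vec m) (x : pvec n1 n2) : R :=
  phi phi1 phi2 x + dot y (resid A1 A2 b x).
Definition ystar_map {m n1 n2} (A1 : mat m n1) (A2 : mat m n2) (b : vec m)
  (x : pvec n1 n2) (beta2 : R) : vec m :=
  vscale (1 / beta2) (resid A1 A2 b x).
Definition Lpsi {m ni} (Ai : mat m ni) (beta2 : R) : R := 2 * (opnorm Ai) ^ 2 / beta2.
Definition prox_obj {m ni n1 n2} (phii : vec ni -> R) (Ai : mat m ni)
  (A1 : mat m n1) (A2 : mat m n2) (b : vec m)
  (xhat : pvec n1 n2) (xhati : vec ni) (beta2 : R) (u : vec ni) : R :=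
  phii u + dot (ystar_map A1 A2 b xhat beta2) (mv Ai (vsub u xhati))
  + Lpsi Ai beta2 / 2 * (vnorm (vsub u xhati)) ^ 2.
Definition is_prox {m n1 n2} (X1 : vec n1 -> Prop) (X2 : vec n2 -> Prop)
  (phi1 : vec n1 -> R) (phi2 : vec n2 -> R) (A1 : mat m n1) (A2 : mat m n2) (b : vec m)
  (xhat : pvec n1 n2) (beta2 : R) (xbar : pvec n1 n2) : Prop :=
  is_argmin X1 (prox_obj phi1 A1 A1 A2 b xhat (fst xhat) beta2) (fst xbar) /\
  is_argmin X2 (prox_obj phi2 A2 A1 A2 b xhat (snd xhat) beta2) (snd xbar).

Fixpoint tau (k : nat) : R :=
  match k with
  | O => 499 / 1000
  | S k' => tau k' / (tau k' + 1)
  end.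
Definition Lbar {m n1 n2} (A1 : mat m n1) (A2 : mat m n2) (sigma1 sigma2 : R) : R :=
  2 * Rmax ((opnorm A1) ^ 2 / sigma1) ((opnorm A2) ^ 2 / sigma2).
Fixpoint beta1 (L : R) (k : nat) : R :=
  match k with
  | O => sqrt L
  | S k' => (1 - tau k') * beta1 L k'
  end.
Fixpoint beta2 (L : R) (k : nat) : R :=
  match k with
  | O => sqrt L
  | S k' => (1 - tau k') * beta2 L k'
  end.

From mathcomp Require Import ssreflect ssrbool ssrnat eqtype fintype bigop.
From Stdlib Require Import Reals List ClassicalEpsilon Lra Psatz FunctionalExtensionality.
Open Scope R_scope.

(* The proof follows Nesterov's excessive gap technique.  With
     smoothed_primal beta x = phi(x) + |A x - b|^2 / (2 beta)  and
     dual_model beta y x   = phi(x) + <y, A x - b> + beta (p1(x1) + p2(x2)),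
   the iterates satisfy the excessive gap condition
     smoothed_primal beta_k (xbar k) <= dual_model beta_k (ybar k) (x^*(ybar k; beta_k)).
   It holds initially ([excessive_gap_init]) and is preserved by each
   iteration ([excessive_gap_step]); both rest on the descent property of the
   proximal step ([prox_descent]), the quadratic growth of strongly convex
   functions at their minimizers ([argmin_growth]), and the compatibility
   [tau_k^2 |A_i|^2 <= beta_{k+1}^2 sigma_i / 2] of the parameter choice
   ([Lbar_coupled], [tau_le_theta_succ]).  Since the dual model at its
   minimizer is at most [d y + beta (D1 + D2)], the condition yields the
   duality gap bound and, through weak duality and Cauchy-Schwarz, the
   feasibility bound; finally [beta_k <= sqrt Lbar / (0.499 k + 1)]. *)

Lemma vsum_ext {n} (f g : 'I_n -> R) : (forall i, f i = g i) -> vsum n f = vsum n g.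
Proof. by move=> fg; apply: eq_bigr => i _; apply: fg. Qed.

Lemma vsum_add {n} (f g : 'I_n -> R) : vsum n (fun i => f i + g i) = vsum n f + vsum n g.
Proof.
apply: (big_rec3 (fun a b c => a = b + c)); first lra.
by move=> i a b c _ ->; lra.
Qed.

Lemma vsum_scal {n} c (f : 'I_n -> R) : vsum n (fun i => c * f i) = c * vsum n f.
Proof.
apply: (big_rec2 (fun a b => a = c * b)); first lra.
by move=> i a b _ ->; lra.
Qed.

Lemma vsum_sub {n} (f g : 'I_n -> R) : vsum n (fun i => f i - g i) = vsum n f - vsum n g.
Proof.
rewrite (vsum_ext _ (fun i => f i + -1 * g i)); last by move=> i; lra.
by rewrite vsum_add vsum_scal; lra.
Qed.

Lemma vsum_le {n} (f g : 'I_n -> R) : (forall i, f i <= g i) -> vsum n f <= vsum n g.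
Proof.
move=> fg; apply: (big_rec2 (fun a b => a <= b)); first lra.
by move=> i a b _ ab; have := fg i; lra.
Qed.

Lemma vsum_0 n : vsum n (fun _ => 0) = 0.
Proof. by apply: (big_rec (fun a => a = 0)) => // i a _ ->; lra. Qed.

Lemma vsum_nonneg {n} (f : 'I_n -> R) : (forall i, 0 <= f i) -> 0 <= vsum n f.
Proof. by move=> f0; rewrite -(vsum_0 n); apply: vsum_le. Qed.

(** * Euclidean geometry of [vec n] *)

Lemma dot_nonneg {n} (u : vec n) : 0 <= dot u u.
Proof. by apply: vsum_nonneg => i /=; nra. Qed.

Lemma vnorm_nonneg {n} (u : vec n) : 0 <= vnorm u.
Proof. exact: sqrt_pos. Qed.

Lemma vnorm_sq {n} (u : vec n) : vnorm u ^ 2 = dot u u.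
Proof. by rewrite /vnorm /= Rmult_1_r sqrt_sqrt //; apply: dot_nonneg. Qed.

Lemma dot_scale_l {n} c (u v : vec n) : dot (vscale c u) v = c * dot u v.
Proof. by rewrite /dot -vsum_scal; apply: vsum_ext => i; rewrite /vscale; lra. Qed.

Lemma dot_scale2 {n} c (u : vec n) : dot (vscale c u) (vscale c u) = c * c * dot u u.
Proof. by rewrite /dot -vsum_scal; apply: vsum_ext => i; rewrite /vscale; ring. Qed.

Lemma vnorm_scale {n} c (u : vec n) : vnorm (vscale c u) = Rabs c * vnorm u.
Proof.
rewrite /vnorm dot_scale2 sqrt_mult; [|nra|exact: dot_nonneg].
by rewrite -/(Rsqr c) sqrt_Rsqr_abs.
Qed.

Lemma vnorm_zero n : vnorm (fun _ : 'I_n => 0) = 0.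
Proof.
rewrite /vnorm /dot (vsum_ext _ (fun _ => 0)) ?vsum_0 ?sqrt_0 //.
by move=> i; ring.
Qed.

Lemma dot_vsub_r {n} (u v w : vec n) : dot u (vsub v w) = dot u v - dot u w.
Proof. by rewrite /dot -vsum_sub; apply: vsum_ext => i; rewrite /vsub; ring. Qed.

Lemma dot_sum2_le {m} (a c : vec m) :
  dot (fun i => a i + c i) (fun i => a i + c i) <= 2 * dot a a + 2 * dot c c.
Proof.
rewrite /dot -!vsum_scal -vsum_add; apply: vsum_le => i /=.
by have := Rle_0_sqr (a i - c i); rewrite /Rsqr; nra.
Qed.

Lemma dot_sum3_le {m} (r a c : vec m) :
  dot (fun i => r i + a i + c i) (fun i => r i + a i + c i)
  <= dot r r + 2 * dot r a + 2 * dot r c + 2 * dot a a + 2 * dot c c.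
Proof.
rewrite /dot -!vsum_scal -!vsum_add; apply: vsum_le => i /=.
by have := Rle_0_sqr (a i - c i); rewrite /Rsqr; nra.
Qed.

(* The quadratic [l |-> |l u - v|^2] is nonnegative; its discriminant gives
   Cauchy-Schwarz in squared form. *)
Lemma cauchy_schwarz_sq {n} (u v : vec n) : dot u v * dot u v <= dot u u * dot v v.
Proof.
have quad_nonneg l : 0 <= dot u u * l * l - 2 * dot u v * l + dot v v.
  have -> : dot u u * l * l - 2 * dot u v * l + dot v v =
            vsum n (fun i => (u i * l - v i) * (u i * l - v i)).
    rewrite (vsum_ext _ (fun i => (l * l) * (u i * u i) + (-2 * l) * (u i * v i) + v i * v i));
      last by move=> i; ring.
    by rewrite !vsum_add !vsum_scal /dot; ring.
  by apply: vsum_nonneg => i; apply: Rle_0_sqr.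
have uu0 := dot_nonneg u; have vv0 := dot_nonneg v.
case: (Rle_lt_or_eq_dec 0 (dot u u) uu0) => [uu_pos | uu_eq0].
- have := quad_nonneg (dot u v / dot u u).
  have -> : dot u u * (dot u v / dot u u) * (dot u v / dot u u)
            - 2 * dot u v * (dot u v / dot u u) + dot v v
          = (dot u u * dot v v - dot u v * dot u v) / dot u u by field; lra.
  move=> H; have : 0 <= (dot u u * dot v v - dot u v * dot u v) / dot u u * dot u u by nra.
  by rewrite /Rdiv Rmult_assoc Rinv_l; lra.
- rewrite -uu_eq0 in quad_nonneg *.
  case: (Req_dec (dot u v) 0) => [-> | uv_nz]; first lra.
  have := quad_nonneg ((dot v v + 1) / (2 * dot u v)).
  have -> : 0 * ((dot v v + 1) / (2 * dot u v)) * ((dot v v + 1) / (2 * dot u v)) -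
    2 * dot u v * ((dot v v + 1) / (2 * dot u v)) + dot v v = -1 by field.
  lra.
Qed.

Lemma cauchy_schwarz {n} (u v : vec n) : dot u v <= vnorm u * vnorm v.
Proof.
rewrite /vnorm -sqrt_mult; try exact: dot_nonneg.
case: (Rle_or_lt (dot u v) 0) => uv; first by have := sqrt_pos (dot u u * dot v v); lra.
rewrite -(sqrt_Rsqr (dot u v)); last lra.
by apply: sqrt_le_1_alt; rewrite /Rsqr; apply: cauchy_schwarz_sq.
Qed.

(** * Matrix-vector products and the operator norm *)

Lemma mv_sub {m n} (A : mat m n) (u v : vec n) i :
  mv A (vsub u v) i = mv A u i - mv A v i.
Proof. by rewrite /mv -vsum_sub; apply: vsum_ext => j; rewrite /vsub; ring. Qed.

Lemma mv_scale {m n} (A : mat m n) c (u : vec n) i : mv A (vscale c u) i = c * mv A u i.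
Proof. by rewrite /mv -vsum_scal; apply: vsum_ext => j; rewrite /vscale; ring. Qed.

Lemma mv_comb {m n} (A : mat m n) t s (u v : vec n) i :
  mv A (vadd (vscale t u) (vscale s v)) i = t * mv A u i + s * mv A v i.
Proof.
by rewrite /mv -!vsum_scal -vsum_add; apply: vsum_ext => j; rewrite /vadd /vscale; ring.
Qed.

(* [opnorm A] really is the least upper bound it is defined to be: the set of
   values [|A x|], [|x| <= 1], is nonempty and bounded by the Frobenius norm. *)
Lemma opnorm_spec {m n} (A : mat m n) : is_lub (opnorm_set A) (opnorm A).
Proof.
apply: epsilon_spec.
set F := vsum m (fun i => dot (A i) (A i)).
have is_bounded : bound (opnorm_set A).
  exists (sqrt F) => r [x [x_le1 ->]].
  have xx_le1 : dot x x <= 1 by rewrite -vnorm_sq; have := vnorm_nonneg x; nra.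
  apply: sqrt_le_1_alt; apply: (Rle_trans _ (F * dot x x)); last first.
    have : 0 <= F by apply: vsum_nonneg => i; apply: dot_nonneg.
    nra.
  rewrite /F Rmult_comm -vsum_scal /dot.
  by apply: vsum_le => i; have := cauchy_schwarz_sq (A i) x; rewrite /dot /mv; lra.
have is_inhabited : exists r, opnorm_set A r.
  by exists (vnorm (mv A (fun _ => 0))), (fun _ => 0); rewrite vnorm_zero; split=> //; lra.
by have [v lub] := completeness _ is_bounded is_inhabited; exists v.
Qed.

Lemma opnorm_nonneg {m n} (A : mat m n) : 0 <= opnorm A.
Proof.
have [ub _] := opnorm_spec A.
apply: (Rle_trans _ (vnorm (mv A (fun _ => 0)))); first exact: vnorm_nonneg.
by apply: ub; exists (fun _ => 0); rewrite vnorm_zero; split=> //; lra.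
Qed.

(* Rescaling [x] to [x / (|x| + e)] for a small [e > 0] shows
   [|A x| <= opnorm A * (|x| + e)], whence the bound. *)
Lemma opnorm_bound_norm {m n} (A : mat m n) (x : vec n) :
  vnorm (mv A x) <= opnorm A * vnorm x.
Proof.
have [ub _] := opnorm_spec A.
have op0 := opnorm_nonneg A; have x0 := vnorm_nonneg x.
have scaled s : 0 < s -> vnorm x <= s -> vnorm (mv A x) <= opnorm A * s.
  move=> s_pos x_le_s.
  have is0 : 0 < / s by apply: Rinv_0_lt_compat.
  have Ax_s : mv A (vscale (/ s) x) = vscale (/ s) (mv A x).
    by apply: functional_extensionality => i; rewrite mv_scale.
  have : vnorm (mv A (vscale (/ s) x)) <= opnorm A.
    apply: ub; exists (vscale (/ s) x); split=> //.
    rewrite vnorm_scale Rabs_right; last lra.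
    by apply: (Rmult_le_reg_l s) => //; rewrite -Rmult_assoc Rinv_r; lra.
  rewrite Ax_s vnorm_scale Rabs_right; last lra.
  move=> H; apply: (Rmult_le_reg_l (/ s)) => //.
  by rewrite (Rmult_comm (opnorm A)) -Rmult_assoc Rinv_l; lra.
apply: Rnot_lt_le => gap.
set e := (vnorm (mv A x) - opnorm A * vnorm x) / (2 * (opnorm A + 1)).
have e_pos : 0 < e by apply: Rdiv_lt_0_compat; lra.
have := scaled (vnorm x + e) ltac:(lra) ltac:(lra).
have : 2 * (opnorm A + 1) * e = vnorm (mv A x) - opnorm A * vnorm x by rewrite /e; field; lra.
nra.
Qed.

Lemma opnorm_bound {m n} (A : mat m n) (x : vec n) :
  dot (mv A x) (mv A x) <= opnorm A ^ 2 * dot x x.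
Proof.
rewrite -!vnorm_sq.
have := opnorm_bound_norm A x; have := vnorm_nonneg (mv A x).
have := opnorm_nonneg A; have := vnorm_nonneg x.
move=> ? ? ? H; have -> : opnorm A ^ 2 * vnorm x ^ 2 = (opnorm A * vnorm x) ^ 2 by ring.
by apply: pow_incr; lra.
Qed.

Lemma Rinv_nonneg x : 0 <= x -> 0 <= / x.
Proof.
case: (Req_dec x 0) => [-> _ | x_nz x0]; first by rewrite Rinv_0; lra.
by apply: Rlt_le; apply: Rinv_0_lt_compat; lra.
Qed.

Lemma le_of_scaled a c : (forall t, 0 < t <= 1 -> (1 - t) * a <= c) -> a <= c.
Proof.
move=> scaled; apply: Rnot_lt_le => c_lt_a.
have c0 : 0 <= c by have := scaled 1 ltac:(lra); lra.
have := scaled ((a - c) / (2 * a)).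
have -> : (1 - (a - c) / (2 * a)) * a = (a + c) / 2 by field; lra.
have t_pos : 0 < (a - c) / (2 * a) by apply: Rdiv_lt_0_compat; lra.
have t_le1 : (a - c) / (2 * a) <= 1.
  by apply: (Rmult_le_reg_r (2 * a)); [lra | rewrite /Rdiv Rmult_assoc Rinv_l; lra].
move=> /(_ (conj t_pos t_le1)); lra.
Qed.

Lemma inv_rescale a beta : a ^ 2 * / (2 * (a * beta)) = a * / (2 * beta).
Proof.
case: (Req_dec a 0) => [-> | a_nz]; first by rewrite Rmult_0_l Rmult_0_r Rinv_0; ring.
case: (Req_dec beta 0) => [-> | beta_nz]; first by rewrite !Rmult_0_r Rinv_0; ring.
by field.
Qed.

Lemma quadratic_root_bound t beta N D :
  0 <= t -> 0 < beta -> 0 <= N -> 0 <= D ->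
  t * t <= 2 * (beta * beta) * D + 2 * beta * N * t ->
  t <= beta * (N + sqrt (N ^ 2 + 2 * D)).
Proof.
move=> t0 beta_pos N0 D0 quad.
have disc0 : 0 <= N ^ 2 + 2 * D by nra.
set s := sqrt (N ^ 2 + 2 * D).
have ss : s * s = N ^ 2 + 2 * D by rewrite /s sqrt_sqrt.
have s0 : 0 <= s by apply: sqrt_pos.
have N_le_s : N <= s by nra.
apply: Rnot_lt_le => t_big.
have : 0 < (t - beta * (N + s)) * (t - beta * (N - s)) by apply: Rmult_lt_0_compat; nra.
have -> : (t - beta * (N + s)) * (t - beta * (N - s))
          = t * t - 2 * beta * N * t + beta * beta * (N * N - s * s) by ring.
rewrite ss; nra.
Qed.

Definition pcomb {n1 n2} (t : R) (x z : pvec n1 n2) : pvec n1 n2 :=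
  padd (pscale t x) (pscale (1 - t) z).

Lemma pcomb_swap {n1 n2} t (x z : pvec n1 n2) :
  padd (pscale (1 - t) x) (pscale t z) = pcomb (1 - t) x z.
Proof. by rewrite /pcomb (_ : 1 - (1 - t) = t) //; ring. Qed.

Lemma pset_comb {n1 n2} {X1 : vec n1 -> Prop} {X2 : vec n2 -> Prop} {t} {x z : pvec n1 n2} :
  convex_set X1 -> convex_set X2 -> 0 <= t <= 1 ->
  pset X1 X2 x -> pset X1 X2 z -> pset X1 X2 (pcomb t x z).
Proof. by move=> cvx1 cvx2 t01 [x1 x2] [z1 z2]; split; [apply: cvx1 | apply: cvx2]. Qed.

Definition sqdist {n} (u v : vec n) : R := dot (vsub u v) (vsub u v).
Definition wdist {n1 n2} (w1 w2 : R) (x z : pvec n1 n2) : R :=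
  w1 * sqdist (fst x) (fst z) + w2 * sqdist (snd x) (snd z).

Lemma wdist_comb {n1 n2} w1 w2 t (a x z : pvec n1 n2) :
  wdist w1 w2 (pcomb t a x) (pcomb t a z) = (1 - t) ^ 2 * wdist w1 w2 x z.
Proof.
have sq n (a' x' z' : vec n) : sqdist (vadd (vscale t a') (vscale (1 - t) x'))
    (vadd (vscale t a') (vscale (1 - t) z')) = (1 - t) ^ 2 * sqdist x' z'.
  by rewrite /sqdist /dot -vsum_scal; apply: vsum_ext => i; rewrite /vsub /vadd /vscale; ring.
by rewrite /wdist /pcomb /padd /pscale /= !sq; ring.
Qed.

(** * The parameters of Algorithm 1 *)

(* Closed forms: [tau k = 0.499 / (1 + 0.499 k)] and
   [beta_i^k = sqrt Lbar * theta k] with [theta k = 0.501 / (0.501 + 0.499 k)]. *)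
Definition theta (k : nat) : R := 501 / 1000 / (501 / 1000 + 499 / 1000 * INR k).

Lemma tau_closed k : tau k = 499 / 1000 / (1 + 499 / 1000 * INR k).
Proof.
elim: k => [|k IH]; first by rewrite /=; field.
have k0 := pos_INR k.
by rewrite (_ : tau k.+1 = tau k / (tau k + 1)) // S_INR IH; field; split; apply: Rgt_not_eq; lra.
Qed.

Lemma tau_range k : 0 <= tau k <= 1.
Proof.
rewrite tau_closed; have k0 := pos_INR k.
split; first by apply: Rlt_le; apply: Rdiv_lt_0_compat; lra.
by apply: (Rmult_le_reg_r (1 + 499 / 1000 * INR k)); [lra | rewrite /Rdiv Rmult_assoc Rinv_l; lra].
Qed.

Lemma theta_succ k : theta k.+1 = (1 - tau k) * theta k.
Proof.
have k0 := pos_INR k.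
by rewrite /theta S_INR tau_closed; field; split; apply: Rgt_not_eq; lra.
Qed.

Lemma beta1_eq_beta2 L k : beta1 L k = beta2 L k.
Proof. by elim: k => //= k ->. Qed.

Lemma beta2_closed L k : beta2 L k = sqrt L * theta k.
Proof.
elim: k => [|k IH]; first by rewrite /theta /=; field.
by rewrite theta_succ /= IH; ring.
Qed.

(* The step sizes stay below the next smoothing factor (this is where
   [tau_0 = 0.499 < 1/2] is used), so every iteration is coupled. *)
Lemma tau_le_theta_succ k : tau k <= theta k.+1.
Proof.
rewrite tau_closed /theta S_INR; have k0 := pos_INR k.
have -> : 501 / 1000 + 499 / 1000 * (INR k + 1) = 1 + 499 / 1000 * INR k by field.
by apply: Rmult_le_compat_r; [apply: Rlt_le; apply: Rinv_0_lt_compat |]; lra.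
Qed.

Lemma theta_pos k : 0 < theta k.
Proof. by rewrite /theta; have k0 := pos_INR k; apply: Rdiv_lt_0_compat; lra. Qed.

Lemma beta2_nonneg L k : 0 <= beta2 L k.
Proof.
by rewrite beta2_closed; apply: Rmult_le_pos; [apply: sqrt_pos | apply: Rlt_le; apply: theta_pos].
Qed.

Lemma beta2_le L k : beta2 L k <= sqrt L / (499 / 1000 * INR k + 1).
Proof.
rewrite beta2_closed /Rdiv; have k0 := pos_INR k.
apply: Rmult_le_compat_l; first exact: sqrt_pos.
have -> : theta k = / (1 + 499 / 501 * INR k) by rewrite /theta; field; lra.
by apply: Rinv_le_contravar; lra.
Qed.

(** * The composite problem *)

Section CompositeProblem.

Context {m n1 n2 : nat} {X1 : vec n1 -> Prop} {X2 : vec n2 -> Prop}.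
Context {phi1 : vec n1 -> R} {phi2 : vec n2 -> R}.
Context {A1 : mat m n1} {A2 : mat m n2} {b : vec m}.

Local Notation X := (pset X1 X2).
Local Notation res := (resid A1 A2 b).
Local Notation Phi := (phi phi1 phi2).
Local Notation Lag := (lagr phi1 phi2 A1 A2 b).

Lemma resid_comb t x z i : res (pcomb t x z) i = t * res x i + (1 - t) * res z i.
Proof.
rewrite /resid /pcomb /padd /pscale /= /vsub /vadd (mv_comb A1) (mv_comb A2); ring.
Qed.

Lemma resid_sub u v i :
  res u i - res v i = mv A1 (vsub (fst u) (fst v)) i + mv A2 (vsub (snd u) (snd v)) i.
Proof. by rewrite /resid /vsub /vadd !mv_sub /vsub; ring. Qed.

Lemma dot_resid_sub r u v :
  dot r (vsub (res u) (res v))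
  = dot r (mv A1 (vsub (fst u) (fst v))) + dot r (mv A2 (vsub (snd u) (snd v))).
Proof.
rewrite /dot -vsum_add; apply: vsum_ext => i.
by rewrite {1}/vsub resid_sub; ring. Qed.

Hypotheses (phi1_cvx : convex_fun phi1) (phi2_cvx : convex_fun phi2).

Lemma phi_convex t x z : 0 <= t <= 1 -> Phi (pcomb t x z) <= t * Phi x + (1 - t) * Phi z.
Proof.
move=> t01; have := phi1_cvx (fst x) (fst z) t t01; have := phi2_cvx (snd x) (snd z) t t01.
by rewrite /phi /pcomb /padd /pscale /=; lra.
Qed.

Lemma lagr_convex y t x z : 0 <= t <= 1 -> Lag y (pcomb t x z) <= t * Lag y x + (1 - t) * Lag y z.
Proof.
move=> t01; have := phi_convex t x z t01; rewrite /lagr.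
have -> : dot y (res (pcomb t x z)) = t * dot y (res x) + (1 - t) * dot y (res z).
  by rewrite /dot -!vsum_scal -vsum_add; apply: vsum_ext => i; rewrite resid_comb; ring.
lra.
Qed.

Definition smoothed_primal (beta : R) (x : pvec n1 n2) : R :=
  Phi x + dot (res x) (res x) * / (2 * beta).

(* One proximal step [xb = P(xh; beta)] brings the smoothed primal objective
   below its quadratic model at [xh], evaluated at any feasible [u]; the
   model's curvature [2 |A_i|^2 / beta] dominates that of the residual term. *)

Lemma prox_descent {xh beta xb u} :
  0 <= beta -> is_prox X1 X2 phi1 phi2 A1 A2 b xh beta xb -> X u ->
  smoothed_primal beta xb
  <= Phi u + dot (res xh) (res xh) * / (2 * beta)
     + / beta * dot (res xh) (vsub (res u) (res xh))
     + / beta * wdist (opnorm A1 ^ 2) (opnorm A2 ^ 2) u xh.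
Proof.
move=> beta0 [[_ opt1] [_ opt2]] [Xu1 Xu2].
have ib0 := Rinv_nonneg _ beta0.
have := opt1 _ Xu1; have := opt2 _ Xu2.
rewrite /prox_obj /ystar_map /Lpsi !dot_scale_l !vnorm_sq.
set r := res xh; set d1 := vsub (fst xb) (fst xh); set d2 := vsub (snd xb) (snd xh).
move=> opt_u2 opt_u1.
have res_xb : res xb = (fun i => r i + mv A1 d1 i + mv A2 d2 i).
  by apply: functional_extensionality => i; have := resid_sub xb xh i; rewrite -/r -/d1 -/d2; lra.
have res_sq : dot (res xb) (res xb) <= dot r r + 2 * dot r (mv A1 d1) + 2 * dot r (mv A2 d2)
              + 2 * (opnorm A1 ^ 2 * dot d1 d1) + 2 * (opnorm A2 ^ 2 * dot d2 d2).
  rewrite res_xb; have := dot_sum3_le r (mv A1 d1) (mv A2 d2).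
  by have := opnorm_bound A1 d1; have := opnorm_bound A2 d2; lra.
have := Rmult_le_compat_l (/ 2 * / beta) _ _ ltac:(nra) res_sq.
rewrite /smoothed_primal /wdist /sqdist dot_resid_sub Rinv_mult /phi -/r.
nra.
Qed.

Lemma prox_feasible xh beta xb : is_prox X1 X2 phi1 phi2 A1 A2 b xh beta xb -> X xb.
Proof. by move=> [[xb1 _] [xb2 _]]. Qed.

Context {p1 : vec n1 -> R} {p2 : vec n2 -> R} {sigma1 sigma2 : R}.
Hypotheses (X1_cvx : convex_set X1) (X2_cvx : convex_set X2).
Hypotheses (p1_sc : strongly_convex_on X1 sigma1 p1) (p2_sc : strongly_convex_on X2 sigma2 p2).

Definition pfun (x : pvec n1 n2) : R := p1 (fst x) + p2 (snd x).

Local Notation Wsigma := (wdist (sigma1 / 2) (sigma2 / 2)).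
Local Notation WA := (wdist (opnorm A1 ^ 2) (opnorm A2 ^ 2)).

Lemma pfun_strong {t} {x z} : X x -> X z -> 0 <= t <= 1 ->
  pfun (pcomb t x z) <= t * pfun x + (1 - t) * pfun z - t * (1 - t) * Wsigma x z.
Proof.
move=> [x1 x2] [z1 z2] t01.
have := p1_sc _ _ t x1 z1 t01; have := p2_sc _ _ t x2 z2 t01.
by rewrite !vnorm_sq /pfun /wdist /sqdist /pcomb /padd /pscale /=; lra.
Qed.

(* Quadratic growth at a minimizer: if [xm] minimizes [F + beta * pfun] over
   [X] with [F] convex, the gap at any [x] is at least [beta * Wsigma x xm].
   (Compare [xm] with [t x + (1 - t) xm] and let [t] go to 0.) *)
Lemma argmin_growth (F : pvec n1 n2 -> R) beta xm :
  (forall t x z, X x -> X z -> 0 <= t <= 1 -> F (pcomb t x z) <= t * F x + (1 - t) * F z) ->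
  0 <= beta -> is_argmin X (fun x => F x + beta * pfun x) xm ->
  forall x, X x -> F xm + beta * pfun xm + beta * Wsigma x xm <= F x + beta * pfun x.
Proof.
move=> F_cvx beta0 [Xxm xm_min] x Xx.
suff : beta * Wsigma x xm <= (F x + beta * pfun x) - (F xm + beta * pfun xm) by lra.
apply: le_of_scaled => t t01.
have t01' : 0 <= t <= 1 by lra.
have := xm_min _ (pset_comb X1_cvx X2_cvx t01' Xx Xxm).
have := F_cvx t x xm Xx Xxm t01'.
have := Rmult_le_compat_l beta _ _ beta0 (pfun_strong Xx Xxm t01').
move=> p_cvx F_cvx' min_cmp.
apply: (Rmult_le_reg_l t); lra.
Qed.

(* the smoothed dual objective [Lag y + beta * pfun], whose minimizer over [X]
   is [x^*(y; beta)] *)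
Definition dual_model (beta : R) (y : vec m) (x : pvec n1 n2) : R := Lag y x + beta * pfun x.

Definition coupled (tau beta : R) : Prop :=
  tau ^ 2 * opnorm A1 ^ 2 <= beta ^ 2 * sigma1 / 2 /\
  tau ^ 2 * opnorm A2 ^ 2 <= beta ^ 2 * sigma2 / 2.

Lemma coupled_bound {tau beta} (x z : pvec n1 n2) :
  0 <= beta -> coupled tau beta -> tau ^ 2 * (/ beta * WA x z) <= beta * Wsigma x z.
Proof.
move=> beta0 [c1 c2].
have := dot_nonneg (vsub (fst x) (fst z)); have := dot_nonneg (vsub (snd x) (snd z)).
rewrite /wdist /sqdist => s2 s1.
case: (Rle_lt_or_eq_dec _ _ beta0) => [beta_pos | <-]; last by rewrite Rinv_0; lra.
apply: (Rmult_le_reg_l beta) => //.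
have -> : forall w, beta * (tau ^ 2 * (/ beta * w)) = tau ^ 2 * w by move=> w; field; lra.
nra.
Qed.

Lemma excessive_gap_init beta xc xb0 x :
  0 <= beta -> coupled 1 beta -> is_argmin X pfun xc -> pfun xc = 0 ->
  is_prox X1 X2 phi1 phi2 A1 A2 b xc beta xb0 -> X x ->
  smoothed_primal beta xb0 <= dual_model beta (ystar_map A1 A2 b xc beta) x.
Proof.
move=> beta0 hcoup [Xxc xc_min] pxc0 hprox Xx.
have desc := prox_descent beta0 hprox Xx.
have grow : 0 + 1 * pfun xc + 1 * Wsigma x xc <= 0 + 1 * pfun x.
  apply: (argmin_growth (fun _ => 0)) => //; [by move=> *; lra | lra |].
  by split=> // z Xz; have := xc_min z Xz; lra.
have coup := coupled_bound x xc beta0 hcoup.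
have := Rmult_le_pos _ _ (Rinv_nonneg _ beta0) (dot_nonneg (res xc)).
have := Rmult_le_compat_l beta _ _ beta0 grow.
rewrite /dual_model /lagr /ystar_map dot_scale_l dot_vsub_r Rinv_mult in desc *.
rewrite pxc0 /Rdiv Rmult_1_l in coup *.
nra.
Qed.

(* Mixing the residuals: with [xh = (1 - tau) xb + tau xm],
   [|r xh|^2 - 2 tau <r xh, r xm> = (1 - tau)^2 |r xb|^2 - tau^2 |r xm|^2],
   so the smoothing term at the shrunken parameter [(1 - tau) beta] is paid
   for by the one at [beta]. *)
Lemma resid_mix_bound tau beta xb xm :
  let rh := res (pcomb (1 - tau) xb xm) in
  tau <= 1 -> 0 <= beta ->
  dot rh rh * / (2 * ((1 - tau) * beta)) - tau * (/ ((1 - tau) * beta) * dot rh (res xm))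
  <= (1 - tau) * (dot (res xb) (res xb) * / (2 * beta)).
Proof.
move=> rh tau1 beta0.
have mix : dot rh rh - 2 * tau * dot rh (res xm)
           = (1 - tau) ^ 2 * dot (res xb) (res xb) - tau ^ 2 * dot (res xm) (res xm).
  rewrite /dot -!vsum_scal -!vsum_sub; apply: vsum_ext => i.
  by rewrite /rh resid_comb; ring.
set ib2 := / (2 * ((1 - tau) * beta)).
have ib2_0 : 0 <= ib2 by apply: Rinv_nonneg; nra.
have -> : / ((1 - tau) * beta) = 2 * ib2.
  by rewrite /ib2 [/ (2 * _)]Rinv_mult -Rmult_assoc Rinv_r; [ring | lra].
have rescale := f_equal (Rmult (dot (res xb) (res xb))) (inv_rescale (1 - tau) beta).
have mix_scaled := f_equal (Rmult ib2) mix.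
have := Rmult_le_pos _ _ ib2_0 (Rmult_le_pos _ _ (pow2_ge_0 tau) (dot_nonneg (res xm))).
rewrite -/ib2 in rescale.
lra.
Qed.

Lemma excessive_gap_step tau beta y xb xm xb' x :
  0 <= tau <= 1 -> 0 <= beta -> coupled tau ((1 - tau) * beta) ->
  X xb -> is_argmin X (dual_model beta y) xm -> X x ->
  is_prox X1 X2 phi1 phi2 A1 A2 b (pcomb (1 - tau) xb xm) ((1 - tau) * beta) xb' ->
  smoothed_primal beta xb <= dual_model beta y xm ->
  smoothed_primal ((1 - tau) * beta) xb'
  <= dual_model ((1 - tau) * beta)
       (vadd (vscale (1 - tau) y)
             (vscale tau (ystar_map A1 A2 b (pcomb (1 - tau) xb xm) ((1 - tau) * beta)))) x.
Proof.
move=> tau01 beta0 hcoup Xxb xm_min Xx hprox gap.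
have beta'0 : 0 <= (1 - tau) * beta by nra.
have Xu := pset_comb X1_cvx X2_cvx (t := 1 - tau) ltac:(lra) Xxb Xx.
have desc := prox_descent beta'0 hprox Xu.
have phi_u := phi_convex (1 - tau) xb x ltac:(lra).
have mix := resid_mix_bound tau beta xb xm ltac:(lra) beta0.
have grow := argmin_growth (Lag y) beta xm
  (fun t x z _ _ => lagr_convex y t x z) beta0 xm_min x Xx.
have coup := coupled_bound x xm beta'0 hcoup.
rewrite wdist_comb (_ : 1 - (1 - tau) = tau) in desc; last ring.
set rh := res (pcomb (1 - tau) xb xm) in desc mix *.
have dist_u : dot rh (vsub (res (pcomb (1 - tau) xb x)) rh) = tau * (dot rh (res x) - dot rh (res xm)).
  rewrite /dot -vsum_sub -vsum_scal; apply: vsum_ext => i.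
  by rewrite {1}/vsub /rh !resid_comb; ring.
have y'_res : dot (vadd (vscale (1 - tau) y) (vscale tau (ystar_map A1 A2 b
                 (pcomb (1 - tau) xb xm) ((1 - tau) * beta)))) (res x)
              = (1 - tau) * dot y (res x) + tau * (/ ((1 - tau) * beta) * dot rh (res x)).
  rewrite /dot -!vsum_scal -vsum_add; apply: vsum_ext => i.
  by rewrite /vadd /ystar_map -/rh /vscale /Rdiv; ring.
rewrite dist_u in desc.
have := Rmult_le_compat_l (1 - tau) _ _ ltac:(lra) gap.
have := Rmult_le_compat_l (1 - tau) _ _ ltac:(lra) grow.
rewrite /dual_model /lagr y'_res.
rewrite /dual_model /smoothed_primal /lagr in gap desc *.
lra.
Qed.

Lemma Lbar_bounds : sigma1 > 0 -> sigma2 > 0 ->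
  let L := Lbar A1 A2 sigma1 sigma2 in
  0 <= L /\ 2 * opnorm A1 ^ 2 <= L * sigma1 /\ 2 * opnorm A2 ^ 2 <= L * sigma2.
Proof.
move=> s1 s2 L.
have q1 : 0 <= opnorm A1 ^ 2 / sigma1 by apply: Rmult_le_pos; [nra | apply: Rinv_nonneg; lra].
have r1 := Rmax_l (opnorm A1 ^ 2 / sigma1) (opnorm A2 ^ 2 / sigma2).
have r2 := Rmax_r (opnorm A1 ^ 2 / sigma1) (opnorm A2 ^ 2 / sigma2).
have e1 : opnorm A1 ^ 2 = opnorm A1 ^ 2 / sigma1 * sigma1 by field; lra.
have e2 : opnorm A2 ^ 2 = opnorm A2 ^ 2 / sigma2 * sigma2 by field; lra.
rewrite /L /Lbar; split; first lra.
by split; [rewrite {1}e1 | rewrite {1}e2]; nra.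
Qed.

Lemma Lbar_coupled tau theta : sigma1 > 0 -> sigma2 > 0 -> 0 <= tau <= theta ->
  coupled tau (sqrt (Lbar A1 A2 sigma1 sigma2) * theta).
Proof.
move=> s1 s2 tau_theta.
have [L0 [L1 L2]] := Lbar_bounds s1 s2.
have N1 := pow2_ge_0 (opnorm A1); have N2 := pow2_ge_0 (opnorm A2).
rewrite /coupled Rpow_mult_distr pow2_sqrt //.
have tt : tau ^ 2 <= theta ^ 2 by apply: pow_incr.
by split; nra.
Qed.

Context {d : vec m -> R}.
Hypothesis dual_value : forall y, is_min_value X (Lag y) (d y).

Lemma dual_model_le beta y xs D1 D2 :
  0 <= beta -> is_argmin X (dual_model beta y) xs ->
  is_max_value X1 p1 D1 -> is_max_value X2 p2 D2 ->
  dual_model beta y xs <= d y + beta * (D1 + D2).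
Proof.
move=> beta0 [_ xs_min] [_ D1_max] [_ D2_max].
have [[xd [[Xxd1 Xxd2] xd_val]] _] := dual_value y.
have := xs_min _ (conj Xxd1 Xxd2); have := D1_max _ Xxd1; have := D2_max _ Xxd2.
rewrite /dual_model /pfun -xd_val => ? ? ?.
have : beta * (p1 (fst xd) + p2 (snd xd)) <= beta * (D1 + D2) by apply: Rmult_le_compat_l; lra.
lra.
Qed.

Lemma duality_gap_bound {beta D y xb} :
  0 <= beta -> smoothed_primal beta xb <= d y + beta * D -> Phi xb - d y <= beta * D.
Proof.
move=> beta0; rewrite /smoothed_primal.
have : 0 <= dot (res xb) (res xb) * / (2 * beta).
  by apply: Rmult_le_pos; [apply: dot_nonneg | apply: Rinv_nonneg; lra].
lra.
Qed.

(* Weak duality at a dual solution [ys] and Cauchy-Schwarz give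
   [|r|^2 / (2 beta) <= beta D + |ys| |r|] for [r = A xb - b]. *)
Lemma feasibility_bound {beta D y ys xb} :
  0 < beta -> 0 <= D -> X xb -> smoothed_primal beta xb <= d y + beta * D ->
  d y <= d ys -> vnorm (res xb) <= beta * (vnorm ys + sqrt (vnorm ys ^ 2 + 2 * D)).
Proof.
move=> beta_pos D0 Xxb gap dual_opt.
have weak_duality := proj2 (dual_value ys) _ Xxb.
have cs := cauchy_schwarz ys (res xb).
apply: quadratic_root_bound => //; try exact: vnorm_nonneg.
have rr : vnorm (res xb) * vnorm (res xb) = dot (res xb) (res xb) by rewrite -vnorm_sq; ring.
have half : dot (res xb) (res xb) * / (2 * beta) <= beta * D + vnorm ys * vnorm (res xb).
  by rewrite /smoothed_primal /lagr in gap weak_duality; lra.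
rewrite rr; apply: (Rmult_le_reg_r (/ (2 * beta))); first by apply: Rinv_0_lt_compat; lra.
have -> : (2 * (beta * beta) * D + 2 * beta * vnorm ys * vnorm (res xb)) * / (2 * beta)
          = beta * D + vnorm ys * vnorm (res xb) by field; lra.
exact: half.
Qed.

Lemma resid_vanishes xf x : opnorm A1 ^ 2 = 0 -> opnorm A2 ^ 2 = 0 ->
  res xf = (fun _ => 0) -> vnorm (res x) = 0.
Proof.
move=> N1 N2 feas.
have r_eq : res x = (fun i => mv A1 (vsub (fst x) (fst xf)) i + mv A2 (vsub (snd x) (snd xf)) i).
  by apply: functional_extensionality => i; rewrite -resid_sub feas; ring.
have : dot (res x) (res x) <= 0.
  rewrite r_eq; apply: (Rle_trans _ _ _ (dot_sum2_le _ _)).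
  have := opnorm_bound A1 (vsub (fst x) (fst xf)).
  by have := opnorm_bound A2 (vsub (snd x) (snd xf)); rewrite N1 N2; lra.
have := dot_nonneg (res x); rewrite /vnorm => ? ?.
by rewrite (_ : dot (res x) (res x) = 0) ?sqrt_0 //; lra.
Qed.

Section Algorithm.

Hypotheses (sigma1_pos : sigma1 > 0) (sigma2_pos : sigma2 > 0).
Local Notation L := (Lbar A1 A2 sigma1 sigma2).

Context {xc1 : vec n1} {xc2 : vec n2} {D1 D2 : R}.
Hypotheses (xc1_min : is_argmin X1 p1 xc1) (xc2_min : is_argmin X2 p2 xc2).
Hypotheses (p1_xc1 : p1 xc1 = 0) (p2_xc2 : p2 xc2 = 0).
Hypotheses (D1_max : is_max_value X1 p1 D1) (D2_max : is_max_value X2 p2 D2).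

Context {xbar : nat -> pvec n1 n2} {ybar : nat -> vec m}.
Context {xs : nat -> pvec n1 n2} {xhat : nat -> pvec n1 n2}.
Hypothesis y0_def : ybar 0%nat = ystar_map A1 A2 b (xc1, xc2) (beta2 L 0).
Hypothesis x0_prox : is_prox X1 X2 phi1 phi2 A1 A2 b (xc1, xc2) (beta2 L 0) (xbar 0%nat).
Hypothesis xs_def : forall k, is_argmin X
  (fun x => Lag (ybar k) x + beta1 L k * (p1 (fst x) + p2 (snd x))) (xs k).
Hypothesis xhat_def : forall k, xhat k = padd (pscale (1 - tau k) (xbar k)) (pscale (tau k) (xs k)).
Hypothesis ybar_succ : forall k, ybar k.+1 =
  vadd (vscale (1 - tau k) (ybar k)) (vscale (tau k) (ystar_map A1 A2 b (xhat k) (beta2 L k.+1))).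
Hypothesis xbar_succ : forall k, is_prox X1 X2 phi1 phi2 A1 A2 b (xhat k) (beta2 L k.+1) (xbar k.+1).

Lemma prox_center : is_argmin X pfun (xc1, xc2) /\ pfun (xc1, xc2) = 0.
Proof.
have [[Xxc1 min1] [Xxc2 min2]] := conj xc1_min xc2_min.
split; last by rewrite /pfun /= p1_xc1 p2_xc2; lra.
split; first by split.
by move=> z [z1 z2]; rewrite /pfun /=; have := min1 _ z1; have := min2 _ z2; lra.
Qed.

Lemma iterate_feasible k : X (xbar k).
Proof. by case: k => [|k]; [apply: prox_feasible x0_prox | apply: prox_feasible (xbar_succ k)]. Qed.

(* As [beta1 = beta2], [xs k] minimizes the smoothed dual objective at [beta2 L k]. *)
Lemma xs_argmin k : is_argmin X (dual_model (beta2 L k) (ybar k)) (xs k).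
Proof. by rewrite -beta1_eq_beta2; apply: xs_def. Qed.

Lemma excessive_gap_invariant k :
  smoothed_primal (beta2 L k) (xbar k) <= dual_model (beta2 L k) (ybar k) (xs k).
Proof.
elim: k => [|k IH].
- have [xc_min pxc0] := prox_center.
  rewrite y0_def; apply: excessive_gap_init => //; first exact: beta2_nonneg.
  + by rewrite beta2_closed; apply: Lbar_coupled => //; rewrite /theta /=; split; [lra | right; field].
  + exact: (proj1 (xs_argmin 0)).
- have := xbar_succ k; rewrite ybar_succ xhat_def pcomb_swap => prox_k.
  apply: excessive_gap_step => //; try exact: tau_range.
  + exact: beta2_nonneg.
  + rewrite (_ : (1 - tau k) * beta2 L k = beta2 L k.+1) // beta2_closed.
    by apply: Lbar_coupled => //; split; [exact: (proj1 (tau_range k)) | exact: tau_le_theta_succ].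
  + exact: iterate_feasible.
  + exact: xs_argmin.
  + exact: (proj1 (xs_argmin k.+1)).
Qed.

Lemma smoothed_gap k :
  smoothed_primal (beta2 L k) (xbar k) <= d (ybar k) + beta2 L k * (D1 + D2).
Proof.
apply: (Rle_trans _ _ _ (excessive_gap_invariant k)).
by apply: dual_model_le => //; [exact: beta2_nonneg | exact: xs_argmin].
Qed.

(* [D_i >= p_i xc_i = 0] *)
Lemma prox_range_nonneg : 0 <= D1 + D2.
Proof.
have := proj2 D1_max _ (proj1 xc1_min); have := proj2 D2_max _ (proj1 xc2_min).
by rewrite p1_xc1 p2_xc2; lra.
Qed.

End Algorithm.

End CompositeProblem.

(* Along the run [beta_k <= sqrt Lbar / (0.499 k + 1)]; the duality gap bound
   is [duality_gap_bound] and the feasibility bound is [feasibility_bound]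
   (when [Lbar = 0] the matrices vanish and the residual is zero). *)
Theorem theorem2
  (m n1 n2 : nat)
  (X1 : vec n1 -> Prop) (X2 : vec n2 -> Prop)
  (phi1 : vec n1 -> R) (phi2 : vec n2 -> R)
  (A1 : mat m n1) (A2 : mat m n2) (b : vec m)
  (* X_i nonempty, closed, convex, bounded; phi_i convex *)
  (hX1ne : nonempty_set X1) (hX1cl : closed_vset X1) (hX1cv : convex_set X1) (hX1bd : bounded_set X1)
  (hX2ne : nonempty_set X2) (hX2cl : closed_vset X2) (hX2cv : convex_set X2) (hX2bd : bounded_set X2)
  (hphi1 : convex_fun phi1) (hphi2 : convex_fun phi2)
  (* standing assumption: the primal solution set is nonempty ... *)
  (hsol : exists xs : pvec n1 n2,
      is_argmin (fun x => pset X1 X2 x /\ resid A1 A2 b x = (fun _ => 0))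
                (phi phi1 phi2) xs)
  (* ... and either Slater (relative interior) or polyhedral X_1, X_2 *)
  (hqual : (exists x : pvec n1 n2, in_ri (pset X1 X2) x /\ resid A1 A2 b x = (fun _ => 0))
           \/ (polyhedral X1 /\ polyhedral X2))
  (* the dual function d(y) = min_{x in X} phi(x) + y^T (A x - b) *)
  (d : vec m -> R)
  (hd : forall y, is_min_value (pset X1 X2) (lagr phi1 phi2 A1 A2 b y) (d y))
  (* Y^* nonempty *)
  (hYne : exists y0 : vec m, forall y, d y <= d y0)
  (* prox-functions p_i with parameters sigma_i, prox-centers xc_i, D_i *)
  (p1 : vec n1 -> R) (p2 : vec n2 -> R) (sigma1 sigma2 : R)
  (xc1 : vec n1) (xc2 : vec n2) (D1 D2 : R)
  (hsig1 : sigma1 > 0) (hsig2 : sigma2 > 0)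
  (hp1c : continuous_on X1 p1) (hp2c : continuous_on X2 p2)
  (hp1s : strongly_convex_on X1 sigma1 p1) (hp2s : strongly_convex_on X2 sigma2 p2)
  (hxc1 : is_argmin X1 p1 xc1) (hxc2 : is_argmin X2 p2 xc2)
  (hp1xc : p1 xc1 = 0) (hp2xc : p2 xc2 = 0)
  (hD1 : is_max_value X1 p1 D1) (hD2 : is_max_value X2 p2 D2)
  (* iterates of Algorithm 1:
     xs k = x^*(ybar^k; beta1^k), xhat k = hat x^k *)
  (xbar : nat -> pvec n1 n2) (ybar : nat -> vec m)
  (xs : nat -> pvec n1 n2) (xhat : nat -> pvec n1 n2)
  (hy0 : ybar 0%nat = ystar_map A1 A2 b (xc1, xc2) (beta2 (Lbar A1 A2 sigma1 sigma2) 0))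
  (hx0 : is_prox X1 X2 phi1 phi2 A1 A2 b (xc1, xc2)
           (beta2 (Lbar A1 A2 sigma1 sigma2) 0) (xbar 0%nat))
  (hxs : forall k, is_argmin (pset X1 X2)
           (fun x => lagr phi1 phi2 A1 A2 b (ybar k) x
                     + beta1 (Lbar A1 A2 sigma1 sigma2) k * (p1 (fst x) + p2 (snd x)))
           (xs k))
  (hxhat : forall k, xhat k = padd (pscale (1 - tau k) (xbar k)) (pscale (tau k) (xs k)))
  (hyS : forall k, ybar (S k) =
           vadd (vscale (1 - tau k) (ybar k))
                (vscale (tau k) (ystar_map A1 A2 b (xhat k)
                                   (beta2 (Lbar A1 A2 sigma1 sigma2) (S k)))))
  (hxS : forall k, is_prox X1 X2 phi1 phi2 A1 A2 b (xhat k)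
           (beta2 (Lbar A1 A2 sigma1 sigma2) (S k)) (xbar (S k))) :
  forall (k : nat) (ystar : vec m), (forall y, d y <= d ystar) ->
    phi phi1 phi2 (xbar k) - d (ybar k)
      <= sqrt (Lbar A1 A2 sigma1 sigma2) * (D1 + D2) / (499 / 1000 * INR k + 1)
    /\ vnorm (resid A1 A2 b (xbar k))
      <= sqrt (Lbar A1 A2 sigma1 sigma2) / (499 / 1000 * INR k + 1)
         * (vnorm ystar + sqrt ((vnorm ystar) ^ 2 + 2 * (D1 + D2))).
Proof.
move=> k ys ys_opt.
have gap := smoothed_gap hphi1 hphi2 hX1cv hX2cv hp1s hp2s hd hsig1 hsig2 hxc1 hxc2
  hp1xc hp2xc hD1 hD2 hy0 hx0 hxs hxhat hyS hxS k.
have D0 := prox_range_nonneg hxc1 hxc2 hp1xc hp2xc hD1 hD2.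
have [L0 [L1 L2]] := Lbar_bounds (A1 := A1) (A2 := A2) hsig1 hsig2.
set L := Lbar A1 A2 sigma1 sigma2 in gap L0 L1 L2 *.
set K := 499 / 1000 * INR k + 1.
have beta_le : beta2 L k <= sqrt L / K := beta2_le L k.
have w_nonneg : 0 <= vnorm ys + sqrt (vnorm ys ^ 2 + 2 * (D1 + D2)).
  by have := vnorm_nonneg ys; have := sqrt_pos (vnorm ys ^ 2 + 2 * (D1 + D2)); lra.
split.
- have := duality_gap_bound (beta2_nonneg L k) gap.
  have := Rmult_le_compat_r _ _ _ D0 beta_le.
  by rewrite (_ : sqrt L * (D1 + D2) / K = sqrt L / K * (D1 + D2)) /Rdiv; [lra | ring].
- case: (Rle_lt_or_eq_dec 0 L L0) => [L_pos | L_eq0].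
  + have beta_pos : 0 < beta2 L k.
      by rewrite beta2_closed; apply: Rmult_lt_0_compat; [apply: sqrt_lt_R0 | apply: theta_pos].
    have := feasibility_bound hd beta_pos D0 (iterate_feasible hx0 hxS k) gap (ys_opt (ybar k)).
    by have := Rmult_le_compat_r _ _ _ w_nonneg beta_le; lra.
  + have [xf [[_ feasible] _]] := hsol.
    rewrite -L_eq0 in L1 L2.
    have N1 : opnorm A1 ^ 2 = 0 by have := pow2_ge_0 (opnorm A1); lra.
    have N2 : opnorm A2 ^ 2 = 0 by have := pow2_ge_0 (opnorm A2); lra.
    rewrite (resid_vanishes xf (xbar k) N1 N2 feasible).
    by rewrite -L_eq0 sqrt_0 /Rdiv Rmult_0_l Rmult_0_l; lra.
Qed.
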